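(* Let $f_1(z)=\dfrac{2(z^2-\frac34)^3}{z^2(z^2-\frac98)^2}-1$. For every $n\ge1$ and every point $v\in\widehat{\mathbb{C}}$ with $f_1^n(v)=\infty$, the local degree satisfies $\deg(f_1^n,v)=2$; equivalently, every $a$-flower of level $n\ge1$ has degree $2$.
   Context: $\operatorname{post}(f_1)=\{-1,1,\infty\}$. An $n$-vertex is a point of $f_1^{-n}(\{-1,1,\infty\})$; it is of type $a$ if $f_1^n(v)=\infty$. The flower $W^n(v)$ of an $n$-vertex $v$ is the union of the closures of the components of $\widehat{\mathbb{C}}\setminus f_1^{-n}(\widehat{\mathbb{R}})$ that contain $v$, and its degree is $\deg(f_1^n,v)$; an $a$-flower is a flower centered at an $n$-vertex of type $a$. *)

From mathcomp Require Import all_boot all_order all_algebra complex.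
From mathcomp Require Import reals.
Set Implicit Arguments. Unset Strict Implicit. Unset Printing Implicit Defensive.
Import Order.TTheory GRing.Theory Num.Theory.
Local Open Scope ring_scope.

Section RatMaps.
Variable C : fieldType.

(* The Riemann sphere: [Some z] is the finite point z, [None] is infinity. *)
Definition sphere := option C.

(* A rational function A/B is represented by a pair (A, B) of polynomials
   (B <> 0); no coprimality is required, everything below only depends on
   the quotient A/B. *)
Definition ratfun := ({poly C} * {poly C})%type.

(* Order (valuation) of A/B at a point of the sphere:
   ord_a = mult_a A - mult_a B at finite a, ord_oo = deg B - deg A
   (i.e. the order at 0 in the local parameter 1/z). *)
Definition rord (a : sphere) (r : ratfun) : int :=
  match a with
  | Some a => (mup a r.1)%:Z - (mup a r.2)%:Z
  | None => (size r.2)%:Z - (size r.1)%:Z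
  end.

Definition rvalue (r : ratfun) (a : sphere) : sphere :=
  if r.1 == 0 then Some 0 else
  let o := rord a r in
  if 0 < o then Some 0 else if o < 0 then None else
  match a with
  | Some a =>
      Some ((r.1 %/ ('X - a%:P) ^+ mup a r.1).[a]
            / (r.2 %/ ('X - a%:P) ^+ mup a r.2).[a])
  | None => Some (lead_coef r.1 / lead_coef r.2)
  end.

(* Local degree deg(phi, a) of the rational map phi = A/B at a:
   ord_a(phi - phi(a)) if phi(a) is finite, ord_a(1/phi) = -ord_a(phi)
   if phi(a) = infinity (orders taken in the local coordinate at a,
   i.e. z - a for finite a and 1/z at infinity). *)
Definition ldeg (r : ratfun) (a : sphere) : int :=
  match rvalue r a with
  | Some w => rord a (r.1 - w *: r.2, r.2)
  | None => - rord a r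
  end.

(* Composition g o h of rational functions:
   if g = A/B with d = max(deg A, deg B) and h = P/Q then
   g o h = (sum_i A_i P^i Q^(d-i)) / (sum_i B_i P^i Q^(d-i)). *)
Definition homog (d : nat) (p : {poly C}) (h : ratfun) : {poly C} :=
  \sum_(i < d.+1) p`_i *: (h.1 ^+ i * h.2 ^+ (d - i)).

Definition rcomp (g h : ratfun) : ratfun :=
  let d := (maxn (size g.1) (size g.2)).-1 in
  (homog d g.1 h, homog d g.2 h).

Definition rid : ratfun := ('X, 1).

Definition riter (g : ratfun) (n : nat) : ratfun := iter n (rcomp g) rid.

Definition f1den : {poly C} := 'X^2 * ('X^2 - (9%:R / 8%:R)%:P) ^+ 2.
Definition f1num : {poly C} :=
  2%:R *: ('X^2 - (3%:R / 4%:R)%:P) ^+ 3 - f1den.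
Definition f1 : ratfun := (f1num, f1den).

End RatMaps.

From mathcomp Require Import all_boot all_order all_algebra complex reals.
From mathcomp Require Import ring.
Set Implicit Arguments. Unset Strict Implicit. Unset Printing Implicit Defensive.
Import Order.TTheory GRing.Theory Num.Theory.
Local Open Scope ring_scope.

(* Lift f1 to the homogeneous map (a, b) |-> (N(a, b), D(a, b)) of degree 6,
   so that f1^k = A_k / B_k with (A_(k+1), B_(k+1)) = (N(A_k, B_k), D(A_k, B_k)).
   By Euler's identity the Wronskian A_k' B_k - A_k B_k' is multiplied at each
   step by J(A_k, B_k) / 6, where J is the Jacobian determinant of (N, D); so
   it does not vanish at z as long as the orbit of z avoids the critical
   points. Every critical value lies in post(f1) = {oo, 1, -1}, which f1 sends
   to its fixed point 1; hence if f1^n(z) = oo, none of z, ..., f1^(n-2)(z) is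
   critical. Then f1^(n-1)(z) is a pole of f1, i.e. a zero of one factor of
   D = a^2 (a^2 - 9/8 b^2)^2, and the nonvanishing Wronskian makes that factor
   of D(A_(n-1), B_(n-1)) vanish simply at z: B_n has a double zero at z.
   The point oo never reaches oo, since f1(oo) = 1. *)

Section HomogeneousForms.
Variables (R : comPzRingType) (t s : R).

(* For t = 3/4 and s = 9/8, f1(a / b) = hnum a b / hden a b; hjac is the
   Jacobian determinant of (hnum, hden). *)
Definition hden (a b : R) : R := a ^+ 2 * (a ^+ 2 - s * b ^+ 2) ^+ 2.
Definition hnum (a b : R) : R := 2%:R * (a ^+ 2 - t * b ^+ 2) ^+ 3 - hden a b.
Definition hjac (a b : R) : R :=
  24%:R * (a ^+ 2 - t * b ^+ 2) ^+ 2 * a * b * (a ^+ 2 - s * b ^+ 2)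
  * ((3%:R * t - 2%:R * s) * a ^+ 2 - t * s * b ^+ 2).

Lemma hden_scale c a b : hden (c * a) (c * b) = c ^+ 6 * hden a b.
Proof. by rewrite /hden; ring. Qed.

Lemma hnum_scale c a b : hnum (c * a) (c * b) = c ^+ 6 * hnum a b.
Proof. by rewrite /hnum hden_scale /hden; ring. Qed.

Lemma hden_b0 a : hden a 0 = a ^+ 6.
Proof. by rewrite /hden; ring. Qed.

Lemma hnum_b0 a : hnum a 0 = a ^+ 6.
Proof. by rewrite /hnum hden_b0; ring. Qed.

Lemma hden_oppl a b : hden (- a) b = hden a b.
Proof. by rewrite /hden; ring. Qed.

Lemma hnum_oppl a b : hnum (- a) b = hnum a b.
Proof. by rewrite /hnum hden_oppl; ring. Qed.

End HomogeneousForms.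

Definition wronskian (R : nzRingType) (A B : {poly R}) := A^`() * B - A * B^`().

Lemma wronskian_hcomp (R : comNzRingType) (t s : R) (A B : {poly R}) :
  6%:R * wronskian (hnum t%:P s%:P A B) (hden s%:P A B)
  = hjac t%:P s%:P A B * wronskian A B.
Proof.
rewrite /wronskian /hnum /hden /hjac.
rewrite !(derivB, derivD, derivM, deriv_exp, derivC, derivMn) /=.
ring.
Qed.

Section RationalMaps.
Variable C : fieldType.

Definition hpoint (a b : C) : sphere C := if b == 0 then None else Some (a / b).

Lemma hpointZ c a b : c != 0 -> hpoint (c * a) (c * b) = hpoint a b.
Proof.
move=> c0; rewrite /hpoint mulf_eq0 (negbTE c0) /=.
by case: eqP => // _; rewrite invfM mulrACA divff // mul1r.
Qed.

Lemma hpointxx x : x != 0 -> hpoint x x = Some 1.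
Proof. by move=> xN0; rewrite /hpoint (negbTE xN0) divff. Qed.

Lemma rvalue_Some (r : ratfun C) z : r.1 != 0 -> r.2 != 0 ->
  ~~ (root r.1 z && root r.2 z) -> rvalue r (Some z) = hpoint r.1.[z] r.2.[z].
Proof.
move=> r1N0 r2N0 coprime; rewrite /rvalue (negbTE r1N0) /rord /hpoint.
have mup_gt0 p : p != 0 -> root p z -> (0 < mup z p)%N.
  by move=> pN0 pz; rewrite -XsubC_dvd // dvdp_XsubCl.
have [r2z|r2Nz] := boolP (root r.2 z).
  have r1Nz : ~~ root r.1 z by move: coprime; rewrite r2z andbT.
  rewrite (mupNroot r1Nz) (eqP r2z) eqxx sub0r oppr_gt0 oppr_lt0 !ltz_nat ltn0.
  by rewrite (mup_gt0 _ r2N0 r2z).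
rewrite (mupNroot r2Nz) subr0 (negbTE (r2Nz : r.2.[z] != 0)).
have [r1z|r1Nz] := boolP (root r.1 z).
  by rewrite ltz_nat (mup_gt0 _ r1N0 r1z) (eqP r1z) mul0r.
by rewrite (mupNroot r1Nz) ltxx !expr0 !divp1.
Qed.

Lemma ldeg_pole (r : ratfun C) z m :
  ~~ root r.1 z -> mup z r.2 = m.+1 -> ldeg r (Some z) = m.+1%:Z.
Proof.
move=> r1Nz mup_r2; have r1N0 : r.1 != 0 by apply: contraNneq r1Nz => ->; rewrite root0.
by rewrite /ldeg /rvalue /rord (negbTE r1N0) (mupNroot r1Nz) mup_r2 sub0r opprK.
Qed.

End RationalMaps.

Lemma horner_hden (R : comNzRingType) (s : R) A B z :
  (hden s%:P A B).[z] = hden s A.[z] B.[z].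
Proof. by rewrite /hden !hornerE. Qed.

Lemma horner_hnum (R : comNzRingType) (t s : R) A B z :
  (hnum t%:P s%:P A B).[z] = hnum t s A.[z] B.[z].
Proof. by rewrite /hnum /hden !hornerE. Qed.

Lemma horner_hjac (R : comNzRingType) (t s : R) A B z :
  (hjac t%:P s%:P A B).[z] = hjac t s A.[z] B.[z].
Proof. by rewrite /hjac !(hornerM, hornerD, hornerN, hornerC, horner_exp, hornerMn). Qed.

Section Multiplicity.
Variable C : fieldType.

Lemma mup_simple_root (p : {poly C}) z : root p z -> p^`().[z] != 0 -> mup z p = 1%N.
Proof.
move=> pz dpz; have pN0 : p != 0 by apply: contraNneq dpz => ->; rewrite deriv0 horner0.
apply/eqP; rewrite eqn_leq mup_leq // mup_geq // expr1 dvdp_XsubCl pz andbT.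
apply: contra dpz => /dvdpP[q ->].
rewrite derivM deriv_exp derivXsubC mul1r.
rewrite !(hornerXsubC, horner_exp, hornerMn, hornerM, hornerD) subrr !expr0n /=.
by rewrite !(mulr0, mul0rn, addr0).
Qed.

Lemma mup_sqr_simple_root (p : {poly C}) z :
  root p z -> p^`().[z] != 0 -> mup z (p ^+ 2) = 2%N.
Proof.
move=> pz dpz; have pN0 : p != 0 by apply: contraNneq dpz => ->; rewrite deriv0 horner0.
by rewrite expr2 mupM // mup_simple_root.
Qed.

End Multiplicity.

Section F1.
Variable C : numFieldType.
Local Notation t := (3%:R / 4%:R : C).
Local Notation s := (9%:R / 8%:R : C).
Local Notation f := (f1 C).

Definition f1num_coefs : seq C :=
  [:: - (2%:R * t ^+ 3); 0; 6%:R * t ^+ 2 - s ^+ 2; 0; 2%:R * s - 6%:R * t; 0; 1].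
Definition f1den_coefs : seq C := [:: 0; 0; s ^+ 2; 0; - (2%:R * s); 0; 1].

Lemma polyseq_f1num : f1num C = f1num_coefs :> seq C.
Proof.
have -> : f1num C = Poly f1num_coefs.
  by rewrite /f1num /f1den /= !cons_poly_def !mul0r !add0r -!mul_polyC; ring.
by rewrite (@PolyK _ 1) ?oner_neq0.
Qed.

Lemma polyseq_f1den : f1den C = f1den_coefs :> seq C.
Proof.
have -> : f1den C = Poly f1den_coefs.
  by rewrite /f1den /= !cons_poly_def !mul0r !add0r; ring.
by rewrite (@PolyK _ 1) ?oner_neq0.
Qed.

Lemma f1num_neq0 : f1num C != 0.
Proof. by rewrite -size_poly_eq0 polyseq_f1num. Qed.

Lemma f1den_neq0 : f1den C != 0.
Proof. by rewrite -size_poly_eq0 polyseq_f1den. Qed.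

Lemma f1num_hnum : f1num C = hnum t%:P s%:P 'X 1.
Proof. by rewrite /f1num /hnum /f1den /hden -!mul_polyC; ring. Qed.

Lemma f1den_hden : f1den C = hden s%:P 'X 1.
Proof. by rewrite /f1den /hden; ring. Qed.

Lemma rcomp_f1 (h : ratfun C) :
  rcomp f h = (hnum t%:P s%:P h.1 h.2, hden s%:P h.1 h.2).
Proof.
rewrite /rcomp /homog /= polyseq_f1num polyseq_f1den /=.
rewrite !big_ord_recr !big_ord0 /= /hnum /hden !subSS ?subn0 ?subnn.
by congr pair; rewrite -!mul_polyC; ring.
Qed.

Lemma riter_f1S k : riter f k.+1 =
  (hnum t%:P s%:P (riter f k).1 (riter f k).2, hden s%:P (riter f k).1 (riter f k).2).
Proof. by rewrite /riter iterS rcomp_f1. Qed.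

Local Notation num := (hnum t s).
Local Notation den := (hden s).
Local Notation jac := (hjac t s).

Lemma t_neq0 : t != 0.
Proof. by rewrite mulf_neq0 ?invr_eq0 ?pnatr_eq0. Qed.

Lemma s_neq0 : s != 0.
Proof. by rewrite mulf_neq0 ?invr_eq0 ?pnatr_eq0. Qed.

Lemma t_neq_s : t != s.
Proof. by rewrite eqr_div ?pnatr_eq0 // -!natrM eqr_nat. Qed.

Lemma hnum_hden_neq0 a b : (a != 0) || (b != 0) -> (num a b != 0) || (den a b != 0).
Proof.
apply: contraTT; rewrite !negb_or !negbK /hnum => /andP[+ /eqP den0].
rewrite den0 subr0 mulf_eq0 pnatr_eq0 expf_eq0 /= subr_eq0 => /eqP a2t.
suff b0 : b = 0 by move/eqP: a2t; rewrite b0 eqxx expr0n mulr0 expf_eq0 andbT.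
move: den0; apply: contra_eq => bN0; rewrite /hden a2t -mulrBl.
have tsN0 : t - s != 0 by rewrite subr_eq0 t_neq_s.
have b2N0 : b ^+ 2 != 0 by rewrite expf_neq0.
exact: mulf_neq0 (mulf_neq0 t_neq0 b2N0) (expf_neq0 2 (mulf_neq0 tsN0 b2N0)).
Qed.

Lemma hden11 : den 1 1 = 64%:R^-1.
Proof. by rewrite /hden; field. Qed.

Lemma hnum11 : num 1 1 = den 1 1.
Proof. by rewrite /hnum hden11; field. Qed.

Lemma hden11_neq0 : den 1 1 != 0.
Proof. by rewrite hden11 invr_eq0 pnatr_eq0. Qed.

Lemma horner_f1num z : (f1num C).[z] = num z 1.
Proof. by rewrite f1num_hnum horner_hnum hornerX hornerC. Qed.

Lemma horner_f1den z : (f1den C).[z] = den z 1.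
Proof. by rewrite f1den_hden horner_hden hornerX hornerC. Qed.

Lemma rvalue_f1_None : rvalue f None = Some 1.
Proof.
rewrite /rvalue (negbTE f1num_neq0) /rord /lead_coef /=.
by rewrite polyseq_f1num polyseq_f1den /= divr1.
Qed.

Lemma rvalue_f1_hpoint a b : (a != 0) || (b != 0) ->
  rvalue f (hpoint a b) = hpoint (num a b) (den a b).
Proof.
move=> abN0; rewrite {1}/hpoint; have [b0|bN0] := eqVneq b 0.
  move: abN0; rewrite b0 eqxx orbF => aN0.
  by rewrite rvalue_f1_None hnum_b0 hden_b0 hpointxx // expf_neq0.
rewrite rvalue_Some /= ?f1num_neq0 ?f1den_neq0 // ?horner_f1num ?horner_f1den.
  rewrite -(hpointZ _ _ (expf_neq0 6 bN0)) -hnum_scale -hden_scale.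
  by rewrite mulr1 (mulrC b) divfK.
rewrite /root horner_f1num horner_f1den negb_and.
by rewrite hnum_hden_neq0 // oner_neq0 orbT.
Qed.

Lemma hjac_eq0 a b : jac a b = 0 ->
  [\/ a ^+ 2 = t * b ^+ 2, a = 0, b = 0 | a ^+ 2 = s * b ^+ 2].
Proof.
have ts : 3%:R * t - 2%:R * s = 0 by field.
move=> /eqP; rewrite /hjac ts mul0r sub0r mulrN oppr_eq0 !mulf_eq0.
rewrite !invr_eq0 !pnatr_eq0 !subr_eq0 /= => jac0.
suff: [|| a ^+ 2 == t * b ^+ 2, a == 0, b == 0 | a ^+ 2 == s * b ^+ 2].
  by case/or4P=> /eqP; [exact: Or41 | exact: Or42 | exact: Or43 | exact: Or44].
by move: jac0; case: (a ^+ 2 == _); case: (a == 0); case: (b == 0); case: (a ^+ 2 == _).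
Qed.

Definition f1_post : seq (sphere C) := [:: None; Some 1; Some (-1)].

Lemma hjac_eq0_post a b : (a != 0) || (b != 0) -> jac a b = 0 ->
  hpoint (num a b) (den a b) \in f1_post.
Proof.
move=> abN0 /hjac_eq0[a2t|a0|b0|a2s]; rewrite !inE.
- have numE : num a b = - den a b by rewrite /hnum /hden a2t subrr expr0n mulr0 sub0r.
  have denN0 : den a b != 0 by move: (hnum_hden_neq0 abN0); rewrite numE oppr_eq0 orbb.
  by rewrite numE /hpoint (negbTE denN0) mulNr divff ?eqxx ?orbT.
- by rewrite /hpoint /hden a0 expr0n mul0r eqxx.
- by move: abN0; rewrite b0 eqxx orbF hnum_b0 hden_b0 => aN0; rewrite hpointxx ?expf_neq0 ?eqxx ?orbT.
- by rewrite /hpoint /hden a2s subrr expr0n mulr0 eqxx.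
Qed.

Lemma rvalue_f1_post x : x \in f1_post -> rvalue f x = Some 1.
Proof.
have hpoint11 : hpoint 1 1 = Some (1 : C) by rewrite hpointxx ?oner_neq0.
have f1_fix : rvalue f (hpoint 1 1) = Some 1.
  by rewrite rvalue_f1_hpoint ?oner_neq0 // hnum11 hpointxx ?hden11_neq0.
rewrite !inE => /or3P[]/eqP->; first exact: rvalue_f1_None.
  by rewrite -{1}hpoint11.
have -> : Some (-1 : C) = hpoint (-1) 1 by rewrite /hpoint oner_eq0 divr1.
by rewrite rvalue_f1_hpoint ?oner_neq0 ?orbT // hnum_oppl hden_oppl -rvalue_f1_hpoint ?oner_neq0.
Qed.

Lemma iter_f1_post x k : x \in f1_post -> iter k.+1 (rvalue f) x = Some 1.
Proof.
move=> xpost; elim: k => [|k IHk]; first exact: rvalue_f1_post.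
by rewrite iterS IHk rvalue_f1_post // !inE eqxx orbT.
Qed.

Lemma mup_hden (A B : {poly C}) z : (A.[z] != 0) || (B.[z] != 0) ->
  den A.[z] B.[z] = 0 -> (wronskian A B).[z] != 0 -> mup z (hden s%:P A B) = 2%N.
Proof.
move=> abN0 den0 WN0; set E := A ^+ 2 - s%:P * B ^+ 2.
have Ez : E.[z] = A.[z] ^+ 2 - s * B.[z] ^+ 2 by rewrite /E !hornerE.
have Wz : (wronskian A B).[z] = A^`().[z] * B.[z] - A.[z] * B^`().[z].
  by rewrite /wronskian !hornerE.
rewrite /hden -/E; have [a0|aN0] := eqVneq A.[z] 0.
  have bN0 : B.[z] != 0 by move: abN0; rewrite a0 eqxx.
  have EzN0 : E.[z] != 0.
    by rewrite Ez a0 expr0n /= sub0r oppr_eq0 mulf_neq0 ?expf_neq0 ?s_neq0.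
  rewrite mupMl; last by rewrite /root horner_exp expf_eq0.
  apply: mup_sqr_simple_root; first exact/eqP.
  by apply: contraNneq WN0 => dA0; rewrite Wz dA0 a0 !mul0r subr0.
have E0 : E.[z] = 0.
  by move/eqP: den0; rewrite /hden -Ez mulf_eq0 !expf_eq0 /= (negbTE aN0) => /eqP.
have dE : B * E^`() = (A * wronskian A B + B^`() * E) *+ 2.
  by rewrite /E /wronskian !(derivB, derivM, derivC, deriv_exp) /=; ring.
have dEz : B.[z] * E^`().[z] = (A.[z] * (wronskian A B).[z]) *+ 2.
  by rewrite -hornerM dE hornerMn hornerD !hornerM E0 mulr0 addr0.
rewrite mupMr; last by rewrite /root horner_exp expf_eq0 /= aN0.
apply: mup_sqr_simple_root; first exact/eqP.
apply/eqP => dE0; move/eqP: dEz; rewrite dE0 mulr0 eq_sym mulrn_eq0 /=.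
by rewrite mulf_eq0 (negbTE aN0) (negbTE WN0).
Qed.

Section Orbit.
Variable z : C.
Local Notation u k := (riter f k).1.[z].
Local Notation v k := (riter f k).2.[z].

Lemma orbit_num k : u k.+1 = num (u k) (v k).
Proof. by rewrite riter_f1S horner_hnum. Qed.

Lemma orbit_den k : v k.+1 = den (u k) (v k).
Proof. by rewrite riter_f1S horner_hden. Qed.

Lemma orbit_neq0 k : (u k != 0) || (v k != 0).
Proof.
elim: k => [|k IHk]; first by rewrite /= hornerC oner_neq0 orbT.
by rewrite orbit_num orbit_den hnum_hden_neq0.
Qed.

Lemma iter_rvalue_f1 k : iter k (rvalue f) (Some z) = hpoint (u k) (v k).
Proof.
elim: k => [|k IHk]; first by rewrite /= hornerX hornerC /hpoint oner_eq0 divr1.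
by rewrite iterS IHk rvalue_f1_hpoint ?orbit_neq0 // -orbit_num -orbit_den.
Qed.

Lemma wronskian_orbit_neq0 m : (forall k, (k < m)%N -> jac (u k) (v k) != 0) ->
  (wronskian (riter f m).1 (riter f m).2).[z] != 0.
Proof.
elim: m => [|m IHm] noncrit.
  by rewrite /wronskian /= derivX derivC !hornerE subr0 oner_neq0.
have WmN0 := IHm (fun k lt_km => noncrit k (ltnW lt_km)).
rewrite riter_f1S; apply: contraTneq (mulf_neq0 (noncrit m (ltnSn m)) WmN0) => Wm1.
by rewrite negbK -horner_hjac -hornerM -wronskian_hcomp mulr_natl hornerMn Wm1 mul0rn.
Qed.

Lemma orbit_noncritical m : iter m.+1 (rvalue f) (Some z) = None ->
  forall k, (k < m)%N -> jac (u k) (v k) != 0.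
Proof.
move=> pole k lt_km; apply/eqP => crit; move: pole.
rewrite -(subnK lt_km) -addSn iterD [iter k.+1 _ _]iterS iter_rvalue_f1.
by rewrite rvalue_f1_hpoint ?orbit_neq0 // iter_f1_post // hjac_eq0_post ?orbit_neq0.
Qed.

End Orbit.

End F1.

Theorem lemma5p1 (R : realType) (n : nat) (v : sphere R[i]) :
  (1 <= n)%N ->
  iter n (rvalue (f1 R[i])) v = None ->
  ldeg (riter (f1 R[i]) n) v = 2%:Z.
Proof.
case: n => // m _; case: v => [z|]; last by rewrite iter_f1_post // inE.
move=> pole; have WN0 := wronskian_orbit_neq0 (orbit_noncritical pole).
move: pole; rewrite iter_rvalue_f1 /hpoint; case: eqP => // vm0 _.
have := orbit_neq0 z m.+1; rewrite vm0 eqxx orbF => umN0.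
rewrite riter_f1S; apply: (ldeg_pole (m := 1)).
  by rewrite /root horner_hnum -orbit_num.
by apply: mup_hden (orbit_neq0 z m) _ WN0; rewrite -orbit_den.
Qed.
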